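(* Let $\delta\in(0,1)$, let $X\subset\mathbb{R}_+$ be a Borel set with $0\in X$, let $x_0>0$, and let $\mathcal B_X=\{F_{(z,\sigma)}:z\in X,\sigma\in[0,1]\}$. For each decision rule $q=(q_0,q_1,q_2,\dots)$ there exists a stationary decision rule $\bar q$ (i.e. one with $\bar q_0=\bar q_1=\bar q_2=\cdots$) such that $R_{\bar q}(x_0,\mathcal B_X)\ge R_q(x_0,\mathcal B_X)$.
   Context: Binary search setting. A binary environment $F_{(z,\sigma)}$ ($z\in X$, $\sigma\in[0,1]$) generates i.i.d. alternatives $x_1,x_2,\dots$, each equal to $z$ with probability $\sigma$ and to $0$ with probability $1-\sigma$. The individual starts with outside option $x_0>0$; payoffs are discounted by $\delta$, and stopping at round $t$ yields $\delta^t\max\{x_0,\dots,x_t\}$ (never stopping yields $0$). A decision rule for binary environments is a sequence $q=(q_0,q_1,\dots)$ with $q_t\in[0,1]$: after a history in which the first $t$ alternatives all equal $0$ it stops with probability $q_t$, and after any history containing a nonzero alternative it stops with probability $1$. For an environment $F$ and history $h$, $U_q(F,h)$ is the expected discounted payoff from $h$ onward (payoff $\delta^{s-t}y_s$ when stopping at round $s$ after history $h_t$), and $V(F,h)$ is the supremum of such expected payoffs over all decision rules. An environment is consistent with a history $h_t=(x_0,\dots,x_t)$ if $x_1,\dots,x_t$ occurs with positive probability under it; a prior is a finitely supported distribution $\mu$ over $\mathcal B_X$, with $U_q(\mu,h)=\sum_F\mu(F\mid h)U_q(F,h)$ ($\mu(\cdot\mid h)$ the Bayesian posterior) and $V(\mu,h)=\sup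 U(\mu,h)$. The performance ratio is $R_q(x_0,\mathcal B_X)=\inf_h\inf_\mu U_q(\mu,h)/V(\mu,h)$, the infima over histories starting with $x_0$ and priors over $\mathcal B_X$ consistent with them. *)

From HB Require Import structures.
From mathcomp Require Import all_boot all_order all_algebra.
From mathcomp Require Import all_classical all_reals all_analysis.
Set Implicit Arguments. Unset Strict Implicit. Unset Printing Implicit Defensive.
Import Order.TTheory GRing.Theory Num.Theory.
Import numFieldNormedType.Exports.
Local Open Scope classical_set_scope.
Local Open Scope ring_scope.

Section BinarySearch.
Variable R : realType.

(* A binary environment F_(z,sigma) is encoded by the pair (z, sigma). *)
Definition env := (R * R)%type.

Definition in_BX (X : set R) (F : env) : Prop :=
  X F.1 /\ 0 <= F.2 <= 1.

Definition alt_prob (F : env) (x : R) : R :=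
  (if x == F.1 then F.2 else 0) + (if x == 0 then 1 - F.2 else 0).

(* A history h_t = (x0, x1, ..., xt) is represented by x0 and the list
   xs = [:: x1; ...; xt] of realised alternatives.
   Probability under F of the alternatives x1..xt. *)
Definition hist_prob (F : env) (xs : seq R) : R :=
  \prod_(x <- xs) alt_prob F x.

Definition consistent (F : env) (xs : seq R) : Prop := 0 < hist_prob F xs.

Definition decision_rule (q : nat -> R) : Prop := forall t, 0 <= q t <= 1.

Definition stationary (q : nat -> R) : Prop := forall t, q t = q 0%N.

Definition hmax (x0 : R) (xs : seq R) : R := \big[Num.max/x0]_(x <- xs) x.

(* Expected discounted payoff U_q(F,h) from the history (x0, xs) onward
   (payoff delta^(s-t) y_s when stopping at round s >= t = size xs).
   If a nonzero alternative has occurred, q stops at once.  Otherwise, with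
   y = max h, sigma' the probability of a nonzero alternative under F, and
   a_k = prod_(j<k) (1 - q_(t+j)) (1 - sigma') the probability of reaching
   round t+k without stopping (all new alternatives 0), the payoff is the sum
   over k of
     delta^k a_k q_(t+k) y                               (stop by q at t+k)
   + delta^(k+1) a_k (1 - q_(t+k)) sigma' max(y, z)      (nonzero alt. at t+k+1).
   Never stopping yields 0. *)
Definition U_env (delta : R) (q : nat -> R) (F : env) (x0 : R) (xs : seq R) : R :=
  let y := hmax x0 xs in
  let t := size xs in
  if all (fun x => x == 0) xs then
    let s' := if F.1 == 0 then 0 else F.2 in
    let a := fun k : nat => \prod_(j < k) ((1 - q (t + j)%N) * (1 - s')) in
    limn (series ((fun k : nat =>
        delta ^+ k * a k * q (t + k)%N * y
      + delta ^+ k.+1 * a k * (1 - q (t + k)%N) * s' * Num.max y F.1) : R^nat))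
  else y.

(* A finitely supported prior over B_X: a finite list of (environment, weight)
   pairs with nonnegative weights summing to 1. *)
Definition prior (X : set R) (mu : seq (env * R)) : Prop :=
  (forall e, e \in mu -> in_BX X e.1 /\ 0 <= e.2) /\
  \sum_(e <- mu) e.2 = 1.

Definition post_norm (mu : seq (env * R)) (xs : seq R) : R :=
  \sum_(e <- mu) e.2 * hist_prob e.1 xs.

Definition prior_consistent (mu : seq (env * R)) (xs : seq R) : Prop :=
  0 < post_norm mu xs.

Definition U_prior (delta : R) (q : nat -> R) (mu : seq (env * R))
    (x0 : R) (xs : seq R) : R :=
  (\sum_(e <- mu) e.2 * hist_prob e.1 xs * U_env delta q e.1 x0 xs)
    / post_norm mu xs.

Definition V_prior (delta : R) (mu : seq (env * R)) (x0 : R) (xs : seq R) : R :=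
  sup [set U_prior delta q mu x0 xs | q in decision_rule].

Definition perf_ratio (delta : R) (X : set R) (x0 : R) (q : nat -> R) : R :=
  inf [set r : R | exists (mu : seq (env * R)) (xs : seq R),
          [/\ prior X mu, prior_consistent mu xs &
               r = U_prior delta q mu x0 xs / V_prior delta mu x0 xs]].

End BinarySearch.

From HB Require Import structures.
From mathcomp Require Import all_boot all_order all_algebra.
From mathcomp Require Import all_classical all_reals all_analysis.
From mathcomp Require Import ring lra.
Import Order.TTheory GRing.Theory Num.Theory.
Import numFieldNormedType.Exports.
Set Implicit Arguments.
Unset Strict Implicit.
Unset Printing Implicit Defensive.
Local Open Scope classical_set_scope.
Local Open Scope ring_scope.

(* Let r be the performance ratio of q.  Testing q on the point-mass prior on
   an environment F after t zero alternatives gives r V(F) <= U_q(F, t) for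
   every t.  The stationary rule continuing with probability g reaches ratio
   r in F iff shortfall F g <= 0, a condition affine in g.  Comparing the
   recursions satisfied by the continuation values of q in two environments
   shows that the values of g at which some environment rewarding patience
   falls short all lie below those at which some impatient one does; hence
   the supremum g* of the former works for every F with nz_prob F < 1, and
   for nz_prob F = 1 by continuity in sigma.  Averaging over the posterior
   then turns r V(F) <= U_g*(F) into the bound for every prior. *)

Section StationaryRule.
Variable R : realType.
Implicit Types (a g : R) (b : nat -> R).

Definition survival_term (a : R) (b : nat -> R) (k : nat) : R :=
  a ^+ k * \prod_(j < k.+1) b j.

Definition survival_sum (a : R) (b : nat -> R) : R :=
  limn (series (survival_term a b)).

Definition survival_weight (a : R) (b : nat -> R) (k : nat) : R :=
  a ^+ k * \prod_(j < k) b j.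

Lemma survival_weightS a b k :
  survival_weight a b k.+1 = a * survival_term a b k.
Proof. by rewrite /survival_weight /survival_term exprS mulrA. Qed.

Lemma survival_termE a b k :
  survival_term a b k = survival_weight a b k * b k.
Proof. by rewrite /survival_weight /survival_term big_ord_recr /= mulrA. Qed.

Section SurvivalSum.
Variables (a : R) (b : nat -> R).
Hypotheses (ha : 0 <= a < 1) (hb : forall j, 0 <= b j <= 1).

Lemma survival_weight_ge0 k : 0 <= survival_weight a b k.
Proof.
case/andP: ha => a0 _; rewrite mulr_ge0 ?exprn_ge0 //.
by apply: prodr_ge0 => j _; case/andP: (hb j).
Qed.

Lemma survival_weight_le k : survival_weight a b k <= a ^+ k.
Proof.
case/andP: ha => a0 _; rewrite -[leRHS]mulr1 ler_wpM2l ?exprn_ge0 //.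
by apply: prodr_ile1 => j _; exact: hb.
Qed.

Lemma survival_term_ge0 k : 0 <= survival_term a b k.
Proof. by rewrite survival_termE mulr_ge0 ?survival_weight_ge0 //; case/andP: (hb k). Qed.

Lemma survival_term_le k : survival_term a b k <= a ^+ k.
Proof.
rewrite survival_termE (le_trans _ (survival_weight_le k)) //.
by rewrite ler_piMr ?survival_weight_ge0 //; case/andP: (hb k).
Qed.

Lemma series_survival_le n : series (survival_term a b) n <= (1 - a)^-1.
Proof.
case/andP: ha => a0 a1.
have a_neq1 : a != 1 by rewrite lt_eqF.
have ha1 : 0 < 1 - a by rewrite subr_gt0.
apply: (@le_trans _ _ (series (geometric 1 a) n)).
  by rewrite !seriesEord ler_sum // => k _; rewrite /geometric /= mul1r survival_term_le.
rewrite geometric_seriesE // /= mul1r -[leRHS]mul1r ler_pM2r ?invr_gt0 //.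
by rewrite lerBlDr lerDl exprn_ge0.
Qed.

Lemma survival_sum_cvg : cvgn (series (survival_term a b)).
Proof.
apply: nondecreasing_is_cvgn.
  by apply/nondecreasing_seqP => n; rewrite seriesSr lerDl survival_term_ge0.
by exists (1 - a)^-1 => _ [n _ <-]; exact: series_survival_le.
Qed.

Lemma survival_sum_ge0 : 0 <= survival_sum a b.
Proof.
apply: limr_ge; first exact: survival_sum_cvg.
by apply: nearW => n; rewrite seriesEord sumr_ge0 // => k _; exact: survival_term_ge0.
Qed.

Lemma survival_sum_le : survival_sum a b <= (1 - a)^-1.
Proof.
apply: limr_le; first exact: survival_sum_cvg.
by apply: nearW => n; exact: series_survival_le.
Qed.

Lemma payoff_series_cvg (y c : R) :
  series (fun k => y * (survival_weight a b k - survival_weight a b k.+1)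
                   + c * survival_term a b k) @ \oo --> y + c * survival_sum a b.
Proof.
have seriesE n : series (fun k => y * (survival_weight a b k - survival_weight a b k.+1)
                                  + c * survival_term a b k) n
    = y * (1 - survival_weight a b n) + c * series (survival_term a b) n.
  elim: n => [|n IH]; last by rewrite !seriesSr IH; ring.
  by rewrite !seriesEord /= !big_ord0 /survival_weight expr0 big_ord0; ring.
have w0 : survival_weight a b @ \oo --> 0.
  apply: (@squeeze_cvgr _ _ _ _ (cst 0) (GRing.exp a)); last 2 first.
  - exact: cvg_cst.
  - by apply: cvg_expr; rewrite ger0_norm //; case/andP: ha.
  by apply: nearW => n; rewrite survival_weight_ge0 survival_weight_le.
rewrite (funext seriesE) -[X in X + _](mulr1 y) -[X in y * X]subr0.
apply: cvgD; first exact: (cvgM (cvg_cst _) (cvgB (cvg_cst _) w0)).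
exact: (cvgM (cvg_cst _) survival_sum_cvg).
Qed.

End SurvivalSum.

Lemma survival_sum_rec a b : 0 <= a < 1 -> (forall j, 0 <= b j <= 1) ->
  survival_sum a b = b 0%N * (1 + a * survival_sum a (fun j => b j.+1)).
Proof.
move=> ha hb.
have seriesS n : series (survival_term a b) n.+1
    = b 0%N * (1 + a * series (survival_term a (fun j => b j.+1)) n).
  rewrite !seriesEord /= big_ord_recl /= /survival_term expr0 mul1r big_ord1.
  rewrite mulrDr mulr1 !mulr_sumr; congr (_ + _); apply: eq_bigr => i _.
  by rewrite /bump /= big_ord_recl /= exprS; ring.
apply: cvg_lim => //; rewrite -cvg_shiftS (funext seriesS).
apply: (cvgM (cvg_cst _) (cvgD (cvg_cst _) (cvgM (cvg_cst _) _))).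
exact: survival_sum_cvg.
Qed.

Lemma survival_sum_const a g : 0 <= a < 1 -> 0 <= g <= 1 ->
  survival_sum a (fun _ => g) = g / (1 - a * g).
Proof.
move=> ha hg; have := @survival_sum_rec a (fun _ => g) ha (fun _ => hg) => /= rec.
have hag : 0 < 1 - a * g.
  case/andP: ha => a0 a1; case/andP: hg => g0 g1.
  by rewrite subr_gt0 (le_lt_trans _ a1) // ler_piMr.
apply: (mulIf (lt0r_neq0 hag)); rewrite mulfVK ?lt0r_neq0 //.
by rewrite mulrBr mulr1 {1}rec; ring.
Qed.

Lemma ge0_of_contraction (D c : nat -> R) (m K : R) :
  0 <= m < 1 -> 0 <= K -> (forall t, 0 <= c t <= m) ->
  (forall t, c t * D t.+1 <= D t) -> (forall t, - K <= D t) ->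
  forall t, 0 <= D t.
Proof.
move=> /andP[m0 m1] K0 hc hD hK.
have lbn n t : - (m ^+ n * K) <= D t.
  elim: n t => [|n IH] t; first by rewrite expr0 mul1r.
  apply: le_trans (hD t); case/andP: (hc t) => c0 cm.
  apply: le_trans (ler_wpM2l c0 (IH t.+1)).
  by rewrite exprS -mulrA mulrN lerN2 ler_wpM2r // mulr_ge0 ?exprn_ge0.
move=> t; have u : (fun n => - (m ^+ n * K)) @ \oo --> - (0 * K).
  by apply: cvgN; apply: cvgM (cvg_cst _); apply: cvg_expr; rewrite ger0_norm.
rewrite -oppr0 -(mul0r K) -(cvg_lim _ u) //.
by apply: limr_le; [exact: cvgP u | apply: nearW => n; exact: lbn].
Qed.

Definition cont_prob (q : nat -> R) (t : nat) : nat -> R := fun j => 1 - q (t + j)%N.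

Lemma cont_prob_bounds q t : decision_rule q -> forall j, 0 <= cont_prob q t j <= 1.
Proof.
move=> hq j; case/andP: (hq (t + j)%N) => q0 q1.
by rewrite subr_ge0 q1 lerBlDr lerDl q0.
Qed.

Lemma cont_probS q t : (fun j => cont_prob q t j.+1) = cont_prob q t.+1.
Proof. by apply: funext => j; rewrite /cont_prob addnS addSn. Qed.

Lemma decision_rule_cst (c : R) : 0 <= c <= 1 -> decision_rule (fun _ => c).
Proof. by move=> hc t. Qed.

Definition survival_gap a g q t :=
  survival_sum a (cont_prob q t) * (1 - a * g) - g.

Section SurvivalGap.
Variables (q : nat -> R) (g : R).
Hypotheses (hq : decision_rule q) (hg : 0 <= g <= 1).

Lemma survival_gap_rec a t : 0 <= a < 1 ->
  survival_gap a g q t = (1 - q t - g) + a * (1 - q t) * survival_gap a g q t.+1.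
Proof.
move=> ha; rewrite /survival_gap survival_sum_rec ?cont_probS //; last exact: cont_prob_bounds.
by rewrite /cont_prob addn0; ring.
Qed.

Lemma survival_gap_bounds a t : 0 <= a < 1 ->
  -1 <= survival_gap a g q t <= (1 - a)^-1.
Proof.
move=> ha; have hb := cont_prob_bounds t hq.
have S0 := survival_sum_ge0 ha hb; have S1 := survival_sum_le ha hb.
case/andP: ha => a0 a1; case/andP: hg => g0 g1.
have ag1 : a * g <= 1 by rewrite mulr_ile1 // ltW.
have : 0 <= survival_sum a (cont_prob q t) * (a * g) by rewrite !mulr_ge0.
rewrite /survival_gap; nra.
Qed.

Lemma survival_gap_le a g' t : 0 <= a < 1 -> g <= g' ->
  survival_gap a g' q t <= survival_gap a g q t.
Proof.
move=> ha gg'; have S0 := survival_sum_ge0 ha (cont_prob_bounds t hq).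
case/andP: ha => a0 _; rewrite /survival_gap lerB // ler_wpM2l // lerB //.
by rewrite ler_wpM2l.
Qed.

Lemma survival_gaps_not_opposite a1 a2 : 0 <= a1 < 1 -> 0 <= a2 < 1 ->
  (forall t, survival_gap a1 g q t < 0) -> (forall t, 0 < survival_gap a2 g q t) ->
  False.
Proof.
move=> ha1 ha2 neg1 pos2.
pose D t := survival_gap a1 g q t - survival_gap a2 g q t.
pose m := Num.max a1 a2.
have hm : 0 <= m < 1.
  by case/andP: ha1 => a10 a11; case/andP: ha2 => a20 a21; rewrite le_max a10 gt_max a11.
have hb t : 0 <= 1 - q t <= 1 by have := cont_prob_bounds 0 hq t; rewrite /cont_prob add0n.
(* D is bounded and D t >= m (1 - q t) D t.+1, which forces D >= 0. *)
have contraction t : m * (1 - q t) * D t.+1 <= D t.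
  rewrite -subr_ge0.
  have -> : D t - m * (1 - q t) * D t.+1 = (1 - q t) *
      ((m - a1) * - survival_gap a1 g q t.+1 + (m - a2) * survival_gap a2 g q t.+1).
    by rewrite /D (survival_gap_rec t ha1) (survival_gap_rec t ha2); ring.
  case/andP: (hb t) => b0 _; apply: mulr_ge0 => //.
  have m1 : a1 <= m by rewrite le_max lexx.
  have m2 : a2 <= m by rewrite le_max lexx orbT.
  have := neg1 t.+1; have := pos2 t.+1; nra.
have lbD t : - (1 + (1 - a2)^-1) <= D t.
  case/andP: (survival_gap_bounds t ha1) => + _; case/andP: (survival_gap_bounds t ha2) => _.
  rewrite /D; lra.
have D0 : 0 <= D 0%N.
  apply: (ge0_of_contraction hm _ _ contraction lbD).
    by rewrite addr_ge0 // invr_ge0 subr_ge0; case/andP: ha2 => _ /ltW.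
  move=> t; case/andP: (hb t) => b0 b1; case/andP: hm => m0 _.
  by rewrite mulr_ge0 //= ler_piMr.
have := neg1 0%N; have := pos2 0%N; rewrite /D in D0; lra.
Qed.

End SurvivalGap.

Implicit Types (d : R) (F : env R) (p q : nat -> R) (xs : seq R).

Definition nz_prob F : R := if F.1 == 0 then 0 else F.2.

Definition cont_discount d F := d * (1 - nz_prob F).

Definition wait_gain d (x0 : R) F :=
  cont_discount d F * x0 + d * nz_prob F * Num.max x0 F.1 - x0.

Definition zero_payoff d (x0 : R) p F t :=
  x0 + wait_gain d x0 F * survival_sum (cont_discount d F) (cont_prob p t).

(* Stop at once, or wait for a nonzero alternative: whichever is better. *)
Definition best_payoff d (x0 : R) F :=
  x0 + Num.max 0 (wait_gain d x0 F / (1 - cont_discount d F)).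

Section Environment.
Variables (d x0 : R) (F : env R).
Hypotheses (hd : 0 <= d < 1) (hF : 0 <= F.2 <= 1).

Lemma nz_prob_bounds : 0 <= nz_prob F <= 1.
Proof. by rewrite /nz_prob; case: ifP; rewrite ?lexx ?ler01. Qed.

Lemma cont_discount_bounds : 0 <= cont_discount d F < 1.
Proof.
case/andP: hd => d0 d1; case/andP: nz_prob_bounds => s0 s1.
rewrite /cont_discount mulr_ge0 ?subr_ge0 //=.
by rewrite (le_lt_trans _ d1) // ler_piMr // lerBlDr lerDl.
Qed.

Lemma cont_discount_Mlt1 g : 0 <= g <= 1 -> 0 < 1 - cont_discount d F * g.
Proof.
case/andP=> g0 g1; case/andP: cont_discount_bounds => a0 a1.
by rewrite subr_gt0 (le_lt_trans _ a1) // ler_piMr.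
Qed.

Lemma U_env_zero p xs : decision_rule p -> 0 < x0 -> all (eq_op^~ 0) xs ->
  U_env d p F x0 xs = zero_payoff d x0 p F (size xs).
Proof.
move=> hp hx0 xs0; rewrite /U_env xs0.
have -> : hmax x0 xs = x0.
  elim: xs xs0 => [|x xs IH] /=; first by rewrite /hmax big_nil.
  by case/andP=> /eqP -> /IH; rewrite /hmax big_cons => ->; rewrite max_r ?ltW.
apply: cvg_lim => //; set t := size xs; set a := cont_discount d F.
have termE k : d ^+ k * \prod_(j < k) ((1 - p (t + j)%N) * (1 - nz_prob F)) * p (t + k)%N * x0
    + d ^+ k.+1 * \prod_(j < k) ((1 - p (t + j)%N) * (1 - nz_prob F))
      * (1 - p (t + k)%N) * nz_prob F * Num.max x0 F.1
  = x0 * (survival_weight a (cont_prob p t) k - survival_weight a (cont_prob p t) k.+1)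
    + wait_gain d x0 F * survival_term a (cont_prob p t) k.
  rewrite survival_weightS survival_termE /survival_weight /wait_gain /a /cont_discount.
  by rewrite big_split /= prodr_const card_ord exprMn exprS /cont_prob; ring.
rewrite (funext termE); apply: payoff_series_cvg.
  exact: cont_discount_bounds.
exact: cont_prob_bounds.
Qed.

Lemma zero_payoff_stationary g t : 0 <= g <= 1 ->
  zero_payoff d x0 (fun _ => 1 - g) F t
  = x0 + wait_gain d x0 F * (g / (1 - cont_discount d F * g)).
Proof.
move=> hg; rewrite /zero_payoff -survival_sum_const //; last exact: cont_discount_bounds.
by congr (_ + _ * survival_sum _ _); apply: funext => j; rewrite /cont_prob subKr.
Qed.

Lemma x0_le_best_payoff : x0 <= best_payoff d x0 F.
Proof. by rewrite lerDl le_max lexx. Qed.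

Lemma zero_payoff_bounds p t : decision_rule p -> 0 < x0 ->
  0 <= zero_payoff d x0 p F t <= best_payoff d x0 F.
Proof.
move=> hp hx0; have ha := cont_discount_bounds.
have a1 : 0 < 1 - cont_discount d F by rewrite subr_gt0; case/andP: ha.
have hb := cont_prob_bounds t hp.
have S0 := survival_sum_ge0 ha hb; have S1 := survival_sum_le ha hb.
rewrite /zero_payoff /best_payoff lerD2l; set k := wait_gain d x0 F.
have [k0|k0] := leP 0 k.
  apply/andP; split; first by apply: addr_ge0; [exact: ltW | exact: mulr_ge0].
  by rewrite le_max ler_wpM2l ?orbT.
apply/andP; split; last by rewrite le_max nmulr_rle0 ?S0.
have gain_ge0 : 0 <= x0 + k / (1 - cont_discount d F).
  have -> : x0 + k / (1 - cont_discount d F)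
      = d * nz_prob F * Num.max x0 F.1 / (1 - cont_discount d F).
    by rewrite /k /wait_gain; field; rewrite lt0r_neq0.
  case/andP: hd => d0 _; case/andP: nz_prob_bounds => s0 _.
  apply: divr_ge0 (ltW a1); apply: mulr_ge0; first exact: mulr_ge0.
  by rewrite le_max (ltW hx0).
by rewrite (le_trans gain_ge0) // lerD2l ler_wnM2l // ltW.
Qed.

Lemma best_payoff_attained t : exists2 p, decision_rule p &
  zero_payoff d x0 p F t = best_payoff d x0 F.
Proof.
have a1 : 0 < 1 - cont_discount d F by rewrite subr_gt0; case/andP: cont_discount_bounds.
have [k0|k0] := leP 0 (wait_gain d x0 F).
  exists (fun _ => 1 - 1); first by apply: decision_rule_cst; rewrite subrr lexx ler01.
  rewrite zero_payoff_stationary ?lexx ?ler01 // mulr1 div1r /best_payoff max_r //.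
  exact: divr_ge0 k0 (ltW a1).
exists (fun _ => 1 - 0); first by apply: decision_rule_cst; rewrite subr0 lexx ler01.
rewrite zero_payoff_stationary ?lexx ?ler01 // mul0r mulr0 /best_payoff max_l //.
by rewrite ltW // pmulr_llt0 ?invr_gt0.
Qed.

End Environment.

Lemma hist_prob_ge0 F xs : 0 <= F.2 <= 1 -> 0 <= hist_prob F xs.
Proof.
case/andP=> s0 s1; rewrite /hist_prob prodr_ge0 // => x _.
by rewrite /alt_prob addr_ge0 //; case: ifP; rewrite ?subr_ge0.
Qed.

Lemma alt_prob0 F : alt_prob F 0 = 1 - nz_prob F.
Proof.
rewrite /alt_prob /nz_prob eqxx eq_sym.
by case: eqP => _; rewrite ?add0r // subr0 addrC subrK.
Qed.

Lemma hist_prob_nseq0 F t : hist_prob F (nseq t 0) = (1 - nz_prob F) ^+ t.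
Proof.
elim: t => [|t IH]; first by rewrite /hist_prob big_nil.
by rewrite /hist_prob /= big_cons -/(hist_prob F _) IH alt_prob0 exprS.
Qed.

Definition post_mean (mu : seq (env R * R)) xs (f : env R -> R) :=
  (\sum_(e <- mu) e.2 * hist_prob e.1 xs * f e.1) / post_norm mu xs.

Section PosteriorMean.
Variables (X : set R) (mu : seq (env R * R)) (xs : seq R).
Hypotheses (hmu : prior X mu) (hcons : prior_consistent mu xs).

Lemma post_mean_cst c : post_mean mu xs (fun _ => c) = c.
Proof. by rewrite /post_mean -mulr_suml mulrC mulKf // lt0r_neq0. Qed.

Lemma post_meanZ c f : c * post_mean mu xs f = post_mean mu xs (fun F => c * f F).
Proof.
rewrite /post_mean mulrA mulr_sumr; congr (_ / _).
by apply: eq_bigr => e _; rewrite mulrCA.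
Qed.

Lemma eq_post_mean (f g : env R -> R) : (forall F, in_BX X F -> f F = g F) ->
  post_mean mu xs f = post_mean mu xs g.
Proof.
move=> fg; rewrite /post_mean big_seq [in RHS]big_seq; congr (_ / _).
by apply: eq_bigr => e /hmu.1 [hF _]; rewrite fg.
Qed.

Lemma ler_post_mean (f g : env R -> R) : (forall F, in_BX X F -> f F <= g F) ->
  post_mean mu xs f <= post_mean mu xs g.
Proof.
move=> fg; apply: ler_wpM2r; first by rewrite invr_ge0 ltW.
rewrite big_seq [leRHS]big_seq; apply: ler_sum => e /hmu.1 [[hX hF] e2].
by apply: ler_wpM2l; [rewrite mulr_ge0 ?hist_prob_ge0 | exact: fg].
Qed.

Lemma post_mean_ge0 f : (forall F, in_BX X F -> 0 <= f F) -> 0 <= post_mean mu xs f.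
Proof. by move=> f0; rewrite -(post_mean_cst 0); exact: ler_post_mean. Qed.

End PosteriorMean.

Lemma post_mean_single F xs f : 0 < hist_prob F xs ->
  post_mean [:: (F, 1)] xs f = f F.
Proof.
move=> hF; rewrite /post_mean /post_norm !big_seq1 /= !mul1r.
by rewrite mulrAC divff ?mul1r // lt0r_neq0.
Qed.

Lemma prior_consistent_single F xs : 0 < hist_prob F xs ->
  prior_consistent [:: (F, 1)] xs.
Proof. by rewrite /prior_consistent /post_norm big_seq1 mul1r. Qed.

Lemma prior_single X F : in_BX X F -> prior X [:: (F, 1)].
Proof.
move=> hF; split; last by rewrite big_seq1.
by move=> e; rewrite mem_seq1 => /eqP -> /=; rewrite ler01.
Qed.

Section Value.
Variables (d x0 : R) (mu : seq (env R * R)) (xs : seq R).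

Lemma V_prior_le c : (forall p, decision_rule p -> U_prior d p mu x0 xs <= c) ->
  V_prior d mu x0 xs <= c.
Proof.
move=> ub; apply: ge_sup; last by move=> _ [p hp <-]; exact: ub.
exists (U_prior d (fun _ => 0) mu x0 xs), (fun _ => 0) => //.
by apply: decision_rule_cst; rewrite lexx ler01.
Qed.

Lemma U_prior_le_V_prior c p : decision_rule p ->
  (forall p', decision_rule p' -> U_prior d p' mu x0 xs <= c) ->
  U_prior d p mu x0 xs <= V_prior d mu x0 xs.
Proof.
move=> hp ub; apply: ub_le_sup; last by exists p.
by exists c => _ [p' hp' <-]; exact: ub.
Qed.

Lemma U_prior_nonzero p : prior_consistent mu xs -> ~~ all (eq_op^~ 0) xs ->
  U_prior d p mu x0 xs = hmax x0 xs.
Proof.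
move=> hcons xs0; rewrite -[RHS](post_mean_cst hcons (hmax x0 xs)).
by rewrite /U_prior /post_mean /U_env (negbTE xs0).
Qed.

Lemma V_prior_nonzero : prior_consistent mu xs -> ~~ all (eq_op^~ 0) xs ->
  V_prior d mu x0 xs = hmax x0 xs.
Proof.
move=> hcons xs0; have r0 : decision_rule (fun _ => 0 : R).
  by apply: decision_rule_cst; rewrite lexx ler01.
apply/le_anti/andP; split.
  by apply: V_prior_le => p _; rewrite U_prior_nonzero.
rewrite -{1}(U_prior_nonzero (fun _ => 0) hcons xs0).
by apply: (U_prior_le_V_prior (c := hmax x0 xs) r0) => p _; rewrite U_prior_nonzero.
Qed.

Variable X : set R.
Hypotheses (hd : 0 <= d < 1) (hx0 : 0 < x0) (hmu : prior X mu).
Hypotheses (hcons : prior_consistent mu xs) (xs0 : all (eq_op^~ 0) xs).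

Lemma U_prior_zero p : decision_rule p ->
  U_prior d p mu x0 xs = post_mean mu xs (fun F => zero_payoff d x0 p F (size xs)).
Proof.
move=> hp; rewrite -[LHS]/(post_mean mu xs (fun F => U_env d p F x0 xs)).
by apply: (eq_post_mean xs hmu) => F [_ hF]; exact: U_env_zero.
Qed.

Lemma U_prior_zero_bounds p : decision_rule p ->
  0 <= U_prior d p mu x0 xs <= post_mean mu xs (best_payoff d x0).
Proof.
move=> hp; rewrite U_prior_zero //; apply/andP; split.
  apply: (post_mean_ge0 hmu hcons) => F [_ hF].
  by case/andP: (zero_payoff_bounds hd hF (size xs) hp hx0).
apply: (ler_post_mean hmu hcons) => F [_ hF].
by case/andP: (zero_payoff_bounds hd hF (size xs) hp hx0).
Qed.

Lemma V_prior_zero_bounds :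
  x0 <= V_prior d mu x0 xs <= post_mean mu xs (best_payoff d x0).
Proof.
have stop : decision_rule (fun _ => 1 - 0 : R).
  by apply: decision_rule_cst; rewrite subr0 lexx ler01.
have ub p : decision_rule p -> U_prior d p mu x0 xs <= post_mean mu xs (best_payoff d x0).
  by move=> hp; case/andP: (U_prior_zero_bounds hp).
rewrite V_prior_le // andbT; apply: le_trans (U_prior_le_V_prior stop ub).
rewrite U_prior_zero // -[X in X <= _](post_mean_cst hcons x0).
apply: (ler_post_mean hmu hcons) => F [_ hF].
by rewrite zero_payoff_stationary ?lexx ?ler01 // mul0r mulr0 addr0.
Qed.

End Value.

Lemma hmax_ge (x0 : R) xs : x0 <= hmax x0 xs.
Proof.
elim: xs => [|x xs IH]; first by rewrite /hmax big_nil.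
by rewrite /hmax big_cons le_max -/(hmax x0 xs) IH orbT.
Qed.

Lemma V_prior_single d (x0 : R) X F xs : 0 <= d < 1 -> 0 < x0 -> in_BX X F ->
  all (eq_op^~ 0) xs -> 0 < hist_prob F xs ->
  V_prior d [:: (F, 1)] x0 xs = best_payoff d x0 F.
Proof.
move=> hd hx0 hXF xs0 hh; have [_ hF] := hXF.
have hmu := prior_single hXF; have hcons := prior_consistent_single hh.
apply/le_anti/andP; split.
  by case/andP: (V_prior_zero_bounds hd hx0 hmu hcons xs0); rewrite post_mean_single.
have [p hp <-] := best_payoff_attained x0 hd hF (size xs).
have -> : zero_payoff d x0 p F (size xs) = U_prior d p [:: (F, 1)] x0 xs.
  by rewrite (U_prior_zero hd hx0 hmu xs0 hp) post_mean_single.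
apply: (U_prior_le_V_prior (c := best_payoff d x0 F)) => // p' hp'.
by case/andP: (U_prior_zero_bounds hd hx0 hmu hcons xs0 hp'); rewrite post_mean_single.
Qed.

Section PerformanceRatio.
Variables (d x0 : R) (X : set R) (q : nat -> R).
Hypotheses (hd : 0 <= d < 1) (hx0 : 0 < x0) (hq : decision_rule q) (hX0 : X 0).

Lemma ratio_ge0 mu xs : prior X mu -> prior_consistent mu xs ->
  0 <= U_prior d q mu x0 xs / V_prior d mu x0 xs.
Proof.
move=> hmu hcons; have [xs0|xs0] := boolP (all (eq_op^~ 0) xs); last first.
  by rewrite U_prior_nonzero // V_prior_nonzero // divr_ge0 // (le_trans (ltW hx0)) ?hmax_ge.
case/andP: (U_prior_zero_bounds hd hx0 hmu hcons xs0 hq) => U0 _.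
case/andP: (V_prior_zero_bounds hd hx0 hmu hcons xs0) => V0 _.
by rewrite divr_ge0 // (le_trans (ltW hx0)).
Qed.

Lemma perf_ratio_ge c :
  (forall mu xs, prior X mu -> prior_consistent mu xs ->
     c <= U_prior d q mu x0 xs / V_prior d mu x0 xs) ->
  c <= perf_ratio d X x0 q.
Proof.
move=> lb; apply: lb_le_inf; last by move=> _ [mu [xs [hmu hcons ->]]]; exact: lb.
pose mu0 : seq (env R * R) := [:: ((0, 0), 1)].
exists (U_prior d q mu0 x0 [::] / V_prior d mu0 x0 [::]), mu0, [::]; split => //.
  by apply: prior_single; rewrite /in_BX /= lexx ler01.
by apply: prior_consistent_single; rewrite /hist_prob big_nil ltr01.
Qed.

Lemma perf_ratio_ge0 : 0 <= perf_ratio d X x0 q.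
Proof. by apply: perf_ratio_ge; exact: ratio_ge0. Qed.

Lemma perf_ratio_le mu xs : prior X mu -> prior_consistent mu xs ->
  perf_ratio d X x0 q <= U_prior d q mu x0 xs / V_prior d mu x0 xs.
Proof.
move=> hmu hcons; apply: ge_inf; last by exists mu, xs.
by exists 0 => _ [mu' [xs' [hmu' hcons' ->]]]; exact: ratio_ge0.
Qed.

(* Test q on the point-mass prior on F after t zero alternatives. *)
Lemma perf_ratio_single F t : in_BX X F -> nz_prob F < 1 ->
  perf_ratio d X x0 q * best_payoff d x0 F <= zero_payoff d x0 q F t.
Proof.
move=> hXF hs; have [_ hF] := hXF.
have hh : 0 < hist_prob F (nseq t 0) by rewrite hist_prob_nseq0 exprn_gt0 // subr_gt0.
have xs0 : all (eq_op^~ 0) (nseq t (0 : R)) by rewrite all_nseq eqxx orbT.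
have := perf_ratio_le (prior_single hXF) (prior_consistent_single hh).
rewrite (V_prior_single hd hx0 hXF xs0 hh) (U_prior_zero hd hx0 (prior_single hXF) xs0 hq).
rewrite post_mean_single // size_nseq ler_pdivlMr //.
exact: lt_le_trans hx0 (x0_le_best_payoff _ _ _).
Qed.

End PerformanceRatio.

Lemma affine_pos_up (P M g : R) : 0 <= g < 1 -> 0 < P - g * M ->
  exists2 g', g < g' <= 1 & 0 < P - g' * M.
Proof.
move=> /andP[g0 g1] hL; have [M0|M0] := leP M 0.
  exists 1; first by rewrite g1 lexx.
  by rewrite mul1r (lt_le_trans hL) //; nra.
set L := P - g * M in hL *; have LM : 0 < L + M by rewrite addr_gt0.
exists (g + (1 - g) * (L / (L + M))).
  have u1 : L / (L + M) <= 1 by rewrite ler_pdivrMr // mul1r lerDl ltW.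
  have : (1 - g) * (L / (L + M)) <= 1 - g by rewrite ler_piMr // subr_ge0 ltW.
  by rewrite ltrDl mulr_gt0 ?subr_gt0 ?divr_gt0 //=; lra.
have -> : P - (g + (1 - g) * (L / (L + M))) * M = L * (L + g * M) / (L + M).
  by rewrite /L; field; rewrite lt0r_neq0.
by rewrite divr_gt0 // mulr_gt0 // ltr_wpDr // mulr_ge0 // ltW.
Qed.

Lemma affine_pos_down (P M g : R) : 0 < g <= 1 -> 0 < P - g * M ->
  exists2 g', 0 <= g' < g & 0 < P - g' * M.
Proof.
move=> /andP[g0 g1] hL.
have h1 : 0 <= 1 - g < 1 by rewrite subr_ge0 g1 /= ltrBlDr ltrDl.
have h2 : 0 < (P - M) - (1 - g) * (- M).
  by have -> : (P - M) - (1 - g) * (- M) = P - g * M by ring.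
have [g'' /andP[lo hi] hpos] := affine_pos_up h1 h2.
exists (1 - g''); first by rewrite subr_ge0 hi ltrBlDr -ltrBlDl.
by have -> : P - (1 - g'') * M = (P - M) - g'' * (- M) by ring.
Qed.

Lemma cvg_max0 (u : nat -> R) l : u @ \oo --> l ->
  (fun n => Num.max 0 (u n)) @ \oo --> Num.max 0 l.
Proof.
move=> ul; rewrite maxr_absE; under eq_fun do rewrite maxr_absE.
apply: cvgM (cvg_cst _); apply: cvgD (cvgD (cvg_cst _) ul) _.
exact: cvg_norm (cvgB (cvg_cst _) ul).
Qed.

Definition shortfall d (x0 r : R) F g :=
  (r * best_payoff d x0 F - x0) * (1 - cont_discount d F * g) - wait_gain d x0 F * g.

Lemma shortfallE d (x0 r : R) F g : shortfall d x0 r F g = (r * best_payoff d x0 F - x0)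
  - g * (cont_discount d F * (r * best_payoff d x0 F - x0) + wait_gain d x0 F).
Proof. by rewrite /shortfall; ring. Qed.

Lemma stationary_ratio_of_shortfall d (x0 r : R) F g t :
  0 <= d < 1 -> 0 <= F.2 <= 1 -> 0 <= g <= 1 -> shortfall d x0 r F g <= 0 ->
  r * best_payoff d x0 F <= zero_payoff d x0 (fun _ => 1 - g) F t.
Proof.
move=> hd hF hg hS; rewrite zero_payoff_stationary // -lerBlDl mulrA.
by rewrite ler_pdivlMr ?cont_discount_Mlt1 // -subr_le0.
Qed.

Lemma survival_gap_of_shortfall d (x0 r : R) q F g t :
  0 <= d < 1 -> 0 <= F.2 <= 1 -> 0 <= g <= 1 ->
  r * best_payoff d x0 F <= zero_payoff d x0 q F t -> 0 < shortfall d x0 r F g ->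
  0 < wait_gain d x0 F * survival_gap (cont_discount d F) g q t.
Proof.
move=> hd hF hg; have hag := cont_discount_Mlt1 hd hF hg.
rewrite /zero_payoff /shortfall /survival_gap -lerBlDl => ratio.
have := ler_wpM2r (ltW hag) ratio; nra.
Qed.

Lemma shortfall_cvg d (x0 r z g s : R) (s_ : nat -> R) :
  z != 0 -> 1 - d * (1 - s) != 0 -> s_ @ \oo --> s ->
  (fun n => shortfall d x0 r (z, s_ n) g) @ \oo --> shortfall d x0 r (z, s) g.
Proof.
move=> hz hs s_cvg; have nzE u : nz_prob (z, u) = u by rewrite /nz_prob /= (negbTE hz).
rewrite /shortfall /best_payoff /wait_gain /cont_discount nzE.
under eq_fun do rewrite nzE.
have a_cvg : (fun n => d * (1 - s_ n)) @ \oo --> d * (1 - s).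
  exact: cvgM (cvg_cst _) (cvgB (cvg_cst _) s_cvg).
have k_cvg : (fun n => d * (1 - s_ n) * x0 + d * s_ n * Num.max x0 (z, s_ n).1 - x0) @ \oo
    --> d * (1 - s) * x0 + d * s * Num.max x0 (z, s).1 - x0.
  apply: cvgB (cvg_cst _); apply: cvgD (cvgM a_cvg (cvg_cst _)) _.
  exact: cvgM (cvgM (cvg_cst _) s_cvg) (cvg_cst _).
apply: cvgB; last by apply: cvgM; [exact: k_cvg | exact: cvg_cst].
apply: cvgM; last first.
  by apply: cvgB; [exact: cvg_cst | apply: cvgM; [exact: a_cvg | exact: cvg_cst]].
apply: cvgB; last exact: cvg_cst.
apply: cvgM; first exact: cvg_cst.
apply: cvgD; first exact: cvg_cst.
apply: cvg_max0; apply: cvgM; first exact: k_cvg.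
by apply: cvgV => //; apply: cvgB; [exact: cvg_cst | exact: a_cvg].
Qed.

Definition patient_shortfalls d X (x0 r : R) : set R :=
  [set g | 0 <= g <= 1 /\ exists F, [/\ in_BX X F, nz_prob F < 1,
     0 < wait_gain d x0 F & 0 < shortfall d x0 r F g]].

Definition crit_cont d X (x0 r : R) := sup (patient_shortfalls d X x0 r `|` [set 0]).

Lemma crit_cont_bounds d X (x0 r : R) : 0 <= crit_cont d X x0 r <= 1.
Proof.
have ub1 : ubound (patient_shortfalls d X x0 r `|` [set 0]) 1.
  by move=> g [[/andP[_ g1] _]|->] //; exact: ler01.
apply/andP; split; last by apply: ge_sup => //; exists 0; right.
by apply: ub_le_sup; [exists 1 | right].
Qed.

Lemma patient_shortfall_le_crit d X (x0 r g : R) :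
  patient_shortfalls d X x0 r g -> g <= crit_cont d X x0 r.
Proof.
move=> hg; apply: ub_le_sup; last by left.
by exists 1 => g' [[/andP[_ g1] _]|->] //; exact: ler01.
Qed.

Section CriticalRule.
Variables (d x0 : R) (X : set R) (q : nat -> R).
Hypotheses (hd : 0 <= d < 1) (hx0 : 0 < x0) (hq : decision_rule q).

Local Notation r := (perf_ratio d X x0 q).
Local Notation g_star := (crit_cont d X x0 r).

Let ratio_single := perf_ratio_single (X := X) hd hx0 hq.

Lemma patient_lt_impatient F1 F2 g1 g2 :
  in_BX X F1 -> nz_prob F1 < 1 -> wait_gain d x0 F1 < 0 ->
  0 <= g1 <= 1 -> 0 < shortfall d x0 r F1 g1 ->
  in_BX X F2 -> nz_prob F2 < 1 -> 0 < wait_gain d x0 F2 ->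
  0 <= g2 <= 1 -> 0 < shortfall d x0 r F2 g2 ->
  g2 < g1.
Proof.
move=> hXF1 hs1 k1 hg1 hL1 hXF2 hs2 k2 hg2 hL2.
have [[_ hF1] [_ hF2]] := (hXF1, hXF2).
rewrite ltNge; apply/negP => g12.
have ha1 := cont_discount_bounds hd hF1; have ha2 := cont_discount_bounds hd hF2.
apply: (survival_gaps_not_opposite hq hg1 ha1 ha2) => t.
  have := survival_gap_of_shortfall hd hF1 hg1 (ratio_single t hXF1 hs1) hL1.
  by rewrite nmulr_rgt0.
have := survival_gap_of_shortfall hd hF2 hg2 (ratio_single t hXF2 hs2) hL2.
by rewrite pmulr_rgt0 // => /lt_le_trans; apply; exact: survival_gap_le.
Qed.

Lemma shortfall_crit_le0_patient F : in_BX X F -> nz_prob F < 1 ->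
  0 < wait_gain d x0 F -> shortfall d x0 r F g_star <= 0.
Proof.
move=> hXF hs k0; have [_ hF] := hXF; rewrite leNgt; apply/negP => hL.
have /andP[g0 g1] := crit_cont_bounds d X x0 r.
have [glt1|gge1] := ltP g_star 1.
  have hg : 0 <= g_star < 1 by rewrite g0 glt1.
  move: hL; rewrite shortfallE => /(affine_pos_up hg) [g' /andP[gl gu]].
  rewrite -shortfallE => hL'; suff : g' <= g_star by rewrite leNgt gl.
  apply: patient_shortfall_le_crit; split; last by exists F.
  by rewrite gu andbT (le_trans g0) // ltW.
have e1 : g_star = 1 by apply/le_anti; rewrite g1 gge1.
have := survival_gap_of_shortfall hd hF (crit_cont_bounds _ _ _ _) (ratio_single 0 hXF hs) hL.
have ha := cont_discount_bounds hd hF.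
have S1 := survival_sum_le ha (cont_prob_bounds 0 hq).
have a1 : 0 < 1 - cont_discount d F by rewrite subr_gt0; case/andP: ha.
by rewrite e1 pmulr_rgt0 // /survival_gap mulr1 subr_gt0 -ltr_pdivrMr // div1r ltNge S1.
Qed.

Lemma shortfall_crit_le0_impatient F : in_BX X F -> nz_prob F < 1 ->
  wait_gain d x0 F < 0 -> shortfall d x0 r F g_star <= 0.
Proof.
move=> hXF hs k0; have [_ hF] := hXF; rewrite leNgt; apply/negP => hL.
have /andP[g0 g1] := crit_cont_bounds d X x0 r.
have [gpos|gle0] := ltP 0 g_star; last first.
  have e0 : g_star = 0 by apply/le_anti; rewrite gle0 g0.
  have := survival_gap_of_shortfall hd hF (crit_cont_bounds _ _ _ _) (ratio_single 0 hXF hs) hL.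
  have S0 := survival_sum_ge0 (cont_discount_bounds hd hF) (cont_prob_bounds 0 hq).
  by rewrite e0 nmulr_rgt0 // /survival_gap !mulr0 !subr0 mulr1 ltNge S0.
have hg : 0 < g_star <= 1 by rewrite gpos g1.
move: hL; rewrite shortfallE => /(affine_pos_down hg) [g' /andP[g'0 g'g]].
rewrite -shortfallE => hL'.
have [e [[he [F2 [hXF2 hs2 k2 hL2]]]|->] g'e] := sup_gt (ex_intro _ 0 (or_intror erefl)) g'g.
  have := patient_lt_impatient hXF hs k0 _ hL' hXF2 hs2 k2 he hL2.
  by rewrite g'0 (le_trans (ltW g'g)) // ltNge (ltW g'e) => /(_ isT).
by move: g'e; rewrite ltNge g'0.
Qed.

Lemma shortfall_crit_le0_lt1 F : in_BX X F -> nz_prob F < 1 ->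
  shortfall d x0 r F g_star <= 0.
Proof.
move=> hXF hs; have [_ hF] := hXF.
have [k0|k0|k0] := ltgtP (wait_gain d x0 F) 0.
- exact: shortfall_crit_le0_impatient.
- exact: shortfall_crit_le0_patient.
have := ratio_single 0 hXF hs; rewrite /zero_payoff /shortfall k0 !mul0r addr0 subr0 => h.
rewrite mulr_le0_ge0 ?subr_le0 //.
exact/ltW/(cont_discount_Mlt1 hd hF (crit_cont_bounds _ _ _ _)).
Qed.

Lemma shortfall_crit_le0 F : in_BX X F -> shortfall d x0 r F g_star <= 0.
Proof.
move=> hXF; have [hs|hs] := ltP (nz_prob F) 1; first exact: shortfall_crit_le0_lt1.
case: F hXF hs => z s [/= hX /andP[s0 s1]] hs.
have hz : z != 0 by apply: contraTneq hs => z0; rewrite /nz_prob /= z0 eqxx ler10.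
move: hs; rewrite /nz_prob /= (negbTE hz) => s1'.
have -> : s = 1 by apply/le_anti; rewrite s1.
pose s_ n : R := 1 - (n.+1%:R)^-1.
have s_bounds n : 0 <= s_ n < 1.
  by rewrite subr_ge0 invf_le1 ?ler1n ?ltr0n //= ltrBlDr ltrDl invr_gt0 ltr0n.
have s_cvg : s_ @ \oo --> (1 : R).
  by have := cvgB (cvg_cst (1 : R)) (@cvg_harmonic R); rewrite subr0; apply.
have hd1 : 1 - d * (1 - 1) != 0 by rewrite subrr mulr0 subr0 oner_neq0.
have L_cvg := shortfall_cvg (x0 := x0) (r := r) (g := g_star) hz hd1 s_cvg.
rewrite -(cvg_lim _ L_cvg) //; apply: limr_le; first exact: cvgP L_cvg.
apply: nearW => n; have /andP[sn0 sn1] := s_bounds n.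
apply: shortfall_crit_le0_lt1; first by split => //=; rewrite sn0 ltW.
by rewrite /nz_prob /= (negbTE hz).
Qed.

End CriticalRule.

End StationaryRule.

Theorem proposition4 (R : realType) (delta : R) (X : set R) (x0 : R)
  (hdelta : 0 < delta < 1)
  (hXpos : X `<=` [set x : R | 0 <= x])
  (hXmeas : measurable X)
  (hX0 : X 0)
  (hx0 : 0 < x0)
  (q : nat -> R) (hq : decision_rule q) :
  exists qbar : nat -> R,
    [/\ decision_rule qbar, stationary qbar &
        perf_ratio delta X x0 q <= perf_ratio delta X x0 qbar].
Proof.
have hd : 0 <= delta < 1 by case/andP: hdelta => d0 d1; rewrite ltW.
set r := perf_ratio delta X x0 q; set g := crit_cont delta X x0 r.
have /andP[g0 g1] := crit_cont_bounds delta X x0 r.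
have hqbar : decision_rule (fun _ => 1 - g).
  by apply: decision_rule_cst; rewrite subr_ge0 g1 lerBlDr lerDl g0.
exists (fun _ => 1 - g); split => //.
apply: perf_ratio_ge => // mu xs hmu hcons.
have [xs0|xs0] := boolP (all (eq_op^~ 0) xs); last first.
  by have := perf_ratio_le hd hx0 hq hmu hcons; rewrite !U_prior_nonzero.
have /andP[V0 V1] := V_prior_zero_bounds hd hx0 hmu hcons xs0.
rewrite ler_pdivlMr ?(lt_le_trans hx0) //.
apply: le_trans (ler_wpM2l (perf_ratio_ge0 hd hx0 hq hX0) V1) _.
rewrite post_meanZ (U_prior_zero hd hx0 hmu xs0 hqbar).
apply: (ler_post_mean hmu hcons) => F hXF.
apply: stationary_ratio_of_shortfall hd hXF.2 _ (shortfall_crit_le0 hd hx0 hq hXF).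
by rewrite g0 g1.
Qed.
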